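(* For every positive integer $n$, the Logarithmic Least Squares Method satisfies invariance to $\alpha$-transformation on a triad: if $\mathbf{A},\hat{\mathbf{A}}\in\mathcal{A}^{n\times n}$ and $\hat{\mathbf{A}}$ is obtained from $\mathbf{A}$ by an $\alpha$-transformation on a triad, then $\mathbf{w}^{LLSM}(\mathbf{A}) = \mathbf{w}^{LLSM}(\hat{\mathbf{A}})$.
   Context: A pairwise comparison matrix of size $n$ is a matrix $\mathbf{A} = [a_{i,j}]$ with positive entries and $a_{j,i} = 1/a_{i,j}$ for all $i,j$; $\mathcal{A}^{n\times n}$ denotes the set of these. The Logarithmic Least Squares Method assigns to $\mathbf{A}$ the minimizer $\mathbf{w}^{LLSM}(\mathbf{A})$, over vectors $\mathbf{w}$ with positive entries summing to 1, of $\sum_{i,j}[\log a_{i,j} - \log(w_i/w_j)]^2$; equivalently $w^{LLSM}_i(\mathbf{A}) = \prod_j a_{i,j}^{1/n}/\sum_k \prod_j a_{k,j}^{1/n}$. An $\alpha$-transformation on the triad $(i,j,k)$ (three distinct indices), with $\alpha>0$, maps $\mathbf{A}$ to $\hat{\mathbf{A}}$ with $\hat a_{i,j} = \alpha a_{i,j}$, $\hat a_{j,i} = a_{j,i}/\alpha$, $\hat a_{j,k} = \alpha a_{j,k}$, $\hat a_{k,j} = a_{k,j}/\alpha$, $\hat a_{k,i} = \alpha a_{k,i}$, $\hat a_{i,k} = a_{i,k}/\alpha$, all other entries unchanged. *)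

From mathcomp Require Import all_boot all_order all_algebra.
From mathcomp Require Import reals exp.
Set Implicit Arguments. Unset Strict Implicit. Unset Printing Implicit Defensive.
Import Order.TTheory GRing.Theory Num.Theory.
Local Open Scope ring_scope.

Definition is_PCM (R : realType) (n : nat) (A : 'M[R]_n) : Prop :=
  (forall i j, 0 < A i j) /\ (forall i j, A j i = (A i j)^-1).

(* Unnormalized LLSM weight: geometric mean of row i, prod_j a_ij^(1/n). *)
Definition llsm_raw (R : realType) (n : nat) (A : 'M[R]_n) (i : 'I_n) : R :=
  \prod_(j < n) (A i j `^ (n%:R^-1)).

Definition w_llsm (R : realType) (n : nat) (A : 'M[R]_n) : 'I_n -> R :=
  fun i => llsm_raw A i / \sum_(k < n) llsm_raw A k.

Definition alpha_transform (R : realType) (n : nat) (alpha : R)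
    (i j k : 'I_n) (A : 'M[R]_n) : 'M[R]_n :=
  \matrix_(p, q)
    if (p == i) && (q == j) then alpha * A p q
    else if (p == j) && (q == i) then A p q / alpha
    else if (p == j) && (q == k) then alpha * A p q
    else if (p == k) && (q == j) then A p q / alpha
    else if (p == k) && (q == i) then alpha * A p q
    else if (p == i) && (q == k) then A p q / alpha
    else A p q.

(** The LLSM weight of row i is the n-th root of the row product
    prod_j a_ij, so LLSM only sees row products.  An alpha-transformation
    on the triad (i,j,k) multiplies each row by a factor with exactly one
    alpha and one alpha^-1 (row i at columns j,k, row j at k,i, row k at
    i,j) or leaves it alone, hence preserves every row product. *)
From mathcomp Require Import all_boot all_order all_algebra.
From mathcomp Require Import reals exp.
From Stdlib Require Import FunctionalExtensionality.
Import Order.TTheory GRing.Theory Num.Theory.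
Local Open Scope ring_scope.

Lemma prod_powR (R : realType) (I : Type) (s : seq I) (P : pred I)
    (F : I -> R) (r : R) :
  (forall x, P x -> 0 <= F x) ->
  \prod_(x <- s | P x) F x `^ r = (\prod_(x <- s | P x) F x) `^ r.
Proof.
move=> F_ge0; elim: s => [|x s IHs]; first by rewrite !big_nil powR1.
rewrite !big_cons; case: ifP => Px //.
by rewrite powRM ?F_ge0 ?IHs ?prodr_ge0.
Qed.

Lemma llsm_rawE (R : realType) (n : nat) (A : 'M[R]_n) (i : 'I_n) :
  (forall j, 0 <= A i j) -> llsm_raw A i = (\prod_j A i j) `^ n%:R^-1.
Proof. by move=> A_ge0; rewrite /llsm_raw prod_powR. Qed.

Lemma w_llsm_eq_row_prod (R : realType) (n : nat) (A B : 'M[R]_n) :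
  (forall i j, 0 <= A i j) -> (forall i j, 0 <= B i j) ->
  (forall i, \prod_j A i j = \prod_j B i j) ->
  w_llsm A = w_llsm B.
Proof.
move=> A_ge0 B_ge0 eq_prod.
have eq_raw i : llsm_raw A i = llsm_raw B i by rewrite !llsm_rawE ?eq_prod.
apply: functional_extensionality => i.
by rewrite /w_llsm eq_raw (eq_bigr _ (fun k _ => eq_raw k)).
Qed.

Lemma prod_if2 (R : comPzSemiRingType) (I : finType) (a b : I) (x y : R) :
  a != b ->
  \prod_q (if q == a then x else if q == b then y else 1) = x * y.
Proof.
move=> ab; rewrite (bigD1 a) //= eqxx (bigD1 b) 1?eq_sym //=.
rewrite (negbTE ab) eqxx big1 ?mulr1 // => q /andP[qb qa].
by rewrite (negbTE qa) (negbTE qb).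
Qed.

Section AlphaTransform.

Variables (R : realType) (n : nat) (alpha : R) (i j k : 'I_n).
Hypotheses (alpha_neq0 : alpha != 0) (ij : i != j) (jk : j != k) (ik : i != k).

Local Notation T := (alpha_transform alpha i j k).

Lemma alpha_transformE (A : 'M[R]_n) p q :
  T A p q = A p q * T (const_mx 1) p q.
Proof. by rewrite !mxE; repeat case: ifP => _; rewrite ?mulr1 ?mul1r // mulrC. Qed.

Lemma prod_row_alpha_transform_const1 p : \prod_q T (const_mx 1) p q = 1.
Proof.
under eq_bigr do rewrite mxE !mxE mulr1 div1r.
have [->|_] := eqVneq p i; first by rewrite !(negbTE ij, negbTE ik) prod_if2 ?mulfV.
have [->|_] := eqVneq p j; first by rewrite (negbTE jk) prod_if2 ?mulVf // eq_sym.
have [_|_] := eqVneq p k; first by rewrite prod_if2 ?mulVf // eq_sym.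
by rewrite big1.
Qed.

Lemma prod_row_alpha_transform (A : 'M[R]_n) p :
  \prod_q T A p q = \prod_q A p q.
Proof.
under eq_bigr do rewrite alpha_transformE.
by rewrite big_split /= prod_row_alpha_transform_const1 mulr1.
Qed.

End AlphaTransform.

Theorem proposition3p3 (R : realType) (n : nat) (A Ahat : 'M[R]_n)
    (alpha : R) (i j k : 'I_n) :
  (0 < n)%N ->
  is_PCM A -> is_PCM Ahat ->
  0 < alpha -> i != j -> j != k -> i != k ->
  Ahat = alpha_transform alpha i j k A ->
  w_llsm A = w_llsm Ahat.
Proof.
move=> _ [A_gt0 _] [Ahat_gt0 _] alpha_gt0 ij jk ik Ahat_def.
apply: w_llsm_eq_row_prod => [p q|p q|p]; rewrite ?ltW //.
by rewrite Ahat_def prod_row_alpha_transform // gt_eqF.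
Qed.
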